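(* Let $\mathbb{F}$ be an infinite field with $\operatorname{char}(\mathbb{F})\neq 2$, let $G$ be a group with a group involution $\ast$, extended $\mathbb{F}$-linearly to $\mathbb{F}G$. Suppose that $\mathbb{F}G$ is normal with respect to $\ast$. Then $G^+\subseteq\zeta(G)$. In particular, $gg^\ast=g^\ast g\in\zeta(G)$ for all $g\in G$.
   Context: A group involution on $G$ is a map $\ast:G\to G$ with $(gh)^\ast=h^\ast g^\ast$ and $(g^\ast)^\ast=g$ for all $g,h\in G$; it is extended $\mathbb{F}$-linearly to an algebra involution of $\mathbb{F}G$. The algebra $\mathbb{F}G$ is normal (with respect to $\ast$) if $\alpha\alpha^\ast=\alpha^\ast\alpha$ for all $\alpha\in\mathbb{F}G$. $G^+=\{g\in G: g^\ast=g\}$, and $\zeta(G)$ is the center of $G$. *)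

From mathcomp Require Import all_boot all_order all_algebra.
Set Implicit Arguments. Unset Strict Implicit. Unset Printing Implicit Defensive.
Import GRing.Theory.
Local Open Scope ring_scope.

Definition is_group (G : eqType) (mul : G -> G -> G) (one : G) (inv : G -> G) :=
  [/\ (forall x y z, mul x (mul y z) = mul (mul x y) z),
      (forall x, mul one x = x), (forall x, mul x one = x)
    & (forall x, mul (inv x) x = one)].

Definition is_group_involution (G : eqType) (mul : G -> G -> G) (star : G -> G) :=
  (forall g h, star (mul g h) = mul (star h) (star g)) /\
  (forall g, star (star g) = g).

(* The group algebra FG: an element is represented by a formal finite sum
   \sum a_i g_i given as a list of pairs (a_i, g_i); two representations
   denote the same element iff all coefficients agree. *)
Definition gaelt (F : fieldType) (G : eqType) := seq (F * G).

Definition ga_coef (F : fieldType) (G : eqType) (a : gaelt F G) (x : G) : F :=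
  \sum_(p <- a | p.2 == x) p.1.

Definition ga_eq (F : fieldType) (G : eqType) (a b : gaelt F G) : Prop :=
  forall x, ga_coef a x = ga_coef b x.

Definition ga_mul (F : fieldType) (G : eqType) (mul : G -> G -> G)
  (a b : gaelt F G) : gaelt F G :=
  [seq (p.1 * q.1, mul p.2 q.2) | p <- a, q <- b].

Definition ga_star (F : fieldType) (G : eqType) (star : G -> G)
  (a : gaelt F G) : gaelt F G := [seq (p.1, star p.2) | p <- a].

Definition ga_normal (F : fieldType) (G : eqType) (mul : G -> G -> G)
  (star : G -> G) : Prop :=
  forall a : gaelt F G,
    ga_eq (ga_mul mul a (ga_star star a)) (ga_mul mul (ga_star star a) a).

Definition infinite_type (T : eqType) : Prop := forall s : seq T, exists x, x \notin s.

(* Testing normality on unit-coefficient sums: [alpha = g] gives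
   [g g^* = g^* g], and then [alpha = g + x] shows that the coefficients of
   [g x^* + x g^*] and [g^* x + x^* g] agree.  These coefficients are at most 2,
   so as char F <> 2 the two multisets {g x^*, x g^*} and {g^* x, x^* g}
   coincide.  For [g = g^*] and [gh <> hg], taking [x = h] forces [h = h^*],
   and then [x = gh] puts [g g h] among {g h g, g h g}, i.e. [gh = hg]. *)

From mathcomp Require Import all_boot all_order all_algebra.
Set Implicit Arguments. Unset Strict Implicit. Unset Printing Implicit Defensive.
Import GRing.Theory.
Local Open Scope ring_scope.

Section UnitSums.
Variables (F : fieldType) (G : eqType).

Definition ga_units (s : seq G) : gaelt F G := [seq (1, x) | x <- s].

Lemma ga_coef_units s z : ga_coef (ga_units s) z = (count_mem z s)%:R.
Proof.
elim: s => [|x s IHs]; first by rewrite /ga_coef big_nil.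
rewrite /ga_coef big_cons -/(ga_coef _ _) IHs /= natrD eq_sym.
by case: (z == x); rewrite ?add0r.
Qed.

Lemma ga_star_units star s : ga_star star (ga_units s) = ga_units (map star s).
Proof. by rewrite /ga_star /ga_units -!map_comp. Qed.

Lemma ga_mul_units mul s t :
  ga_mul mul (ga_units s) (ga_units t) = ga_units [seq mul x y | x <- s, y <- t].
Proof.
by rewrite /ga_mul allpairs_mapl allpairs_mapr /ga_units map_allpairs /= mulr1.
Qed.
End UnitSums.

Lemma natr_inj_le2 (F : fieldType) (m n : nat) : ~~ (2%N \in [pchar F]) ->
  (m <= 2)%N -> (n <= 2)%N -> m%:R = n%:R :> F -> m = n.
Proof.
move=> charF2; wlog le_mn : m n / (m <= n)%N => [hw hm hn e|].
  have [le_mn|le_nm] := leqP m n; first exact: hw.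
  by apply/esym/hw => //; apply: ltnW.
move=> _ le_n2 /eqP; rewrite eq_sym -subr_eq0 -natrB // => /eqP e.
have : (n - m <= 2)%N by rewrite (leq_trans (leq_subr _ _)).
rewrite leq_eqVlt ltnS leq_eqVlt ltnS leqn0 => /or3P[] /eqP d.
- by move: charF2; rewrite inE /= -d e eqxx.
- by move: e; rewrite d => /eqP; rewrite oner_eq0.
- by apply/eqP; rewrite eqn_leq le_mn -subn_eq0 d.
Qed.

Section NormalGroupAlgebra.
Variables (F : fieldType) (G : eqType) (mul : G -> G -> G) (star : G -> G).
Hypothesis normalFG : ga_normal F mul star.

Lemma ga_normal_count s z :
  (count_mem z [seq mul x (star y) | x <- s, y <- s])%:R =
  (count_mem z [seq mul (star x) y | x <- s, y <- s])%:R :> F.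
Proof.
have := normalFG (ga_units F s) z.
by rewrite ga_star_units !ga_mul_units allpairs_mapl allpairs_mapr !ga_coef_units.
Qed.

Lemma ga_normal_mul_star_comm g : mul g (star g) = mul (star g) g.
Proof.
have := ga_normal_count [:: g] (mul g (star g)); rewrite /= eqxx.
by case: eqP => // _ /eqP; rewrite oner_eq0.
Qed.

Hypothesis charF2 : ~~ (2%N \in [pchar F]).

Lemma ga_normal_perm g x :
  perm_eq [:: mul g (star x); mul x (star g)] [:: mul (star g) x; mul (star x) g].
Proof.
apply/allP => z _; apply/eqP/(natr_inj_le2 charF2); rewrite ?count_size //.
have := ga_normal_count [:: g; x] z.
rewrite /= !ga_normal_mul_star_comm !natrD !addr0 => /addrI.
by rewrite !addrA => /addIr.
Qed.
End NormalGroupAlgebra.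

Section GroupWithInvolution.
Variables (G : eqType) (mul : G -> G -> G) (one : G) (inv : G -> G) (star : G -> G).
Hypothesis groupG : is_group mul one inv.
Hypothesis involutionG : is_group_involution mul star.

Lemma mulI : right_injective mul.
Proof.
case: groupG => mulA mul1g _ mulVg a b c e.
by rewrite -(mul1g b) -(mul1g c) -(mulVg a) -!mulA e.
Qed.

Hypothesis perm_star :
  forall g x, perm_eq [:: mul g (star x); mul x (star g)] [:: mul (star g) x; mul (star x) g].

Lemma symmetric_central g : star g = g -> forall h, mul g h = mul h g.
Proof.
case: groupG involutionG => mulA _ _ _ [star_mul _] sg h.
case: (mul g h =P mul h g) => // gh_neq_hg; exfalso.
have mem_perm x y : y \in [:: mul (star g) x; mul (star x) g] ->
    y \in [:: mul g (star x); mul x (star g)] by rewrite (perm_mem (perm_star g x)).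
have sh : star h = h.
  have := mem_perm h (mul g h); rewrite sg !inE eqxx => /(_ isT).
  by case/orP=> /eqP // /mulI.
have := mem_perm (mul g h) (mul g (mul g h)); rewrite star_mul sh sg !inE eqxx.
by case/(_ isT)/orP=> /eqP; rewrite -?mulA => /mulI.
Qed.
End GroupWithInvolution.

Theorem lemma5 (F : fieldType) (G : eqType) (mul : G -> G -> G) (one : G)
  (inv : G -> G) (star : G -> G) :
  infinite_type F -> ~~ (2%N \in [pchar F]) ->
  is_group mul one inv -> is_group_involution mul star ->
  ga_normal F mul star ->
  (forall g, star g = g -> forall h, mul g h = mul h g) /\
  (forall g, mul g (star g) = mul (star g) g /\
             forall h, mul (mul g (star g)) h = mul h (mul g (star g))).
Proof.
move=> _ charF2 groupG involutionG normalFG.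
have central := symmetric_central groupG involutionG (ga_normal_perm normalFG charF2).
split=> // g; split=> [|h]; first exact: (ga_normal_mul_star_comm normalFG g).
by case: involutionG => star_mul starK; apply: central; rewrite star_mul starK.
Qed.
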